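(* Let $B_R=(V,E)$ be the Bratteli diagram with $|V_n|=n+1$ vertices at each level $n\ge0$, in which each vertex of $V_n$ is joined to each vertex of $V_{n+1}$ by exactly one edge. Then the full group $G$ of $B_R$ is isomorphic to the group $R$ of rational permutations of the unit interval $[0,1)$.
   Context: For a Bratteli diagram with levels $V_0=\{v_0\},V_1,\dots$ and edge sets $E_n$ from $V_{n-1}$ to $V_n$, the path space $X$ is the set of infinite paths from $v_0$; $G_n$ is the group of homeomorphisms of $X$ that replace the first $n$ edges of each path by another path from $v_0$ to the same vertex of $V_n$ (depending only on those edges) and leave the rest unchanged; the full group is $G=\bigcup_nG_n$. For $n\in\mathbb N$ and a permutation $s$ of $\{0,1,\dots,n-1\}$, let $g_s:[0,1)\to[0,1)$ be $g_s(x)=\bigl(s(\lfloor nx\rfloor)+\{nx\}\bigr)/n$, where $\{a\}$ is the fractional part of $a$. The group $R$ is the set of all bijections $g_s$, over all $n\in\mathbb N$ and all permutations $s$ of $\{0,\dots,n-1\}$, under composition. *)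

From Stdlib Require Import Reals ZArith.
From mathcomp Require Import all_boot all_fingroup.

Set Implicit Arguments.
Unset Strict Implicit.
Unset Printing Implicit Defensive.

(* BV n = V_n ; BE n = the edge set E_{n+1} from V_n to V_{n+1}. *)
Record Bratteli := {
  BV : nat -> finType;
  BE : nat -> finType;
  bsrc : forall n, BE n -> BV n;
  brng : forall n, BE n -> BV n.+1;
  broot : BV 0;
  broot_unique : forall v : BV 0, v = broot
}.

Definition is_path (D : Bratteli) (x : forall n, BE D n) : Prop :=
  bsrc (x 0) = broot D /\ forall n, brng (x n) = bsrc (x n.+1).

Definition Path (D : Bratteli) := {x : forall n, BE D n | is_path x}.

(* G_n : bijections of the path space that replace the first n edges by
   another path (depending only on those first n edges) and leave all
   further edges unchanged.  (The endpoint in V_n is automatically kept,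
   since edge n+1 is unchanged; such maps are automatically homeomorphisms
   of the path space.) *)
Definition inGn (D : Bratteli) (n : nat) (g : Path D -> Path D) : Prop :=
  bijective g /\
  (forall x y : Path D, (forall k, (k < n)%N -> proj1_sig x k = proj1_sig y k) ->
      forall k, (k < n)%N -> proj1_sig (g x) k = proj1_sig (g y) k) /\
  (forall (x : Path D) k, (n <= k)%N -> proj1_sig (g x) k = proj1_sig x k).

Definition inFullGroup (D : Bratteli) (g : Path D -> Path D) : Prop :=
  exists n, inGn n g.

(* |V_n| = n+1, exactly one edge between each v in V_n and w in V_{n+1}:
   edges from V_n to V_{n+1} are the pairs (v,w). *)
Definition BR_E (n : nat) : finType := ('I_n.+1 * 'I_n.+2)%type.

Lemma BR_root_unique : forall v : 'I_1, v = ord0.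
Proof. by move=> v; apply/val_inj; case: v => [[|m] Hm]. Qed.

Definition B_R : Bratteli :=
  {| BV := fun n => 'I_n.+1;
     BE := BR_E;
     bsrc := fun n e => e.1;
     brng := fun n e => e.2;
     broot := ord0;
     broot_unique := BR_root_unique |}.

Definition I01 := {x : R | Rle 0 x /\ Rlt x 1}.
Open Scope R_scope.

(* g_s(x) = (s(floor(m x)) + frac(m x)) / m for a permutation s of
   {0,...,m-1}, here with m = n+1 >= 1. *)
Definition is_g_s (n : nat) (s : {perm 'I_n.+1}) (f : I01 -> I01) : Prop :=
  forall x : I01,
    proj1_sig (f x) =
    ((INR (nat_of_ord (s (inord (Z.to_nat (Int_part (INR n.+1 * proj1_sig x)))))) +
      frac_part (INR n.+1 * proj1_sig x)) / INR n.+1).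

Definition inRgroup (f : I01 -> I01) : Prop :=
  exists n (s : {perm 'I_n.+1}), is_g_s s f.

Definition comp_groups_isomorphic (A B : Type)
  (GA : (A -> A) -> Prop) (GB : (B -> B) -> Prop) : Prop :=
  exists phi : (A -> A) -> (B -> B),
    (forall g, GA g -> GB (phi g)) /\
    (forall g h, GA g -> GA h -> phi g = phi h -> g = h) /\
    (forall f, GB f -> exists2 g, GA g & phi g = f) /\
    (forall g h, GA g -> GA h -> phi (g \o h) = phi g \o phi h).

From Stdlib Require Import Reals ZArith Lia Lra.
From Stdlib Require Import ProofIrrelevance FunctionalExtensionality ClassicalEpsilon.
From mathcomp Require Import all_boot all_fingroup zify.

(* Paths of B_R through level n correspond to mixed-radix numerals
   d_0 ... d_(n-1) with d_i < i+2 (d_i being the vertex visited in V_(i+1)),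
   i.e. to ranks a < (n+1)!.  An element of G_n permutes these ranks by some
   map t; it is sent to the rational permutation moving the block
   [a/(n+1)!, (a+1)/(n+1)!) onto block t a.  Going up a level splits every
   block into n+2 subblocks without changing that map, which makes the
   assignment well defined and multiplicative; it is injective since the map
   determines t.  Conversely, g_s for a permutation s of n+1 blocks is its
   own refinement to (n+2)! blocks, and this refinement preserves ranks
   modulo n+2, i.e. the vertex reached in V_(n+1), so it is realised by an
   element of G_(n+1). *)

Set Implicit Arguments.
Unset Strict Implicit.
Unset Printing Implicit Defensive.

Local Open Scope nat_scope.

Fixpoint rank (n : nat) (d : nat -> nat) : nat :=
  if n is n'.+1 then n'.+2 * rank n' d + d n' else 0.

Fixpoint unrank (n a : nat) : nat -> nat :=
  if n is n'.+1 then fun i => if i == n' then a %% n'.+2 else unrank n' (a %/ n'.+2) i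
  else fun _ => 0.

Definition radix_bounded (n : nat) (d : nat -> nat) := forall i, i < n -> d i < i.+2.

Lemma eq_rank n d e : (forall i, i < n -> d i = e i) -> rank n d = rank n e.
Proof.
elim: n => [//|n IHn] de /=; rewrite IHn ?de // => i lt_in.
exact/de/ltnW.
Qed.

Lemma rank_lt n d : radix_bounded n d -> rank n d < (n.+1)`!.
Proof.
elim: n => [//|n IHn] dlt /=.
have := IHn (fun i lt_in => dlt i (ltnW lt_in)); have := dlt n (ltnSn n).
rewrite (factS n.+1); nia.
Qed.

Lemma rank_mod n d : d n < n.+2 -> rank n.+1 d %% n.+2 = d n.
Proof. by move=> dn /=; rewrite mulnC modnMDl modn_small. Qed.

Lemma rank_inj n d e : radix_bounded n d -> radix_bounded n e ->
  rank n d = rank n e -> forall i, i < n -> d i = e i.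
Proof.
elim: n => [//|n IHn] dlt elt de_rank i lt_in.
have dn_en : d n = e n.
  by rewrite -(rank_mod (dlt n (ltnSn n))) -(rank_mod (elt n (ltnSn n))) de_rank.
have rank_de : rank n d = rank n e by move: de_rank => /=; rewrite dn_en; nia.
case: (ltngtP i n) => [lt_in'|lt_ni|->//]; last by lia.
by apply: IHn => // j lt_jn; [apply: dlt | apply: elt]; apply: ltnW.
Qed.

Lemma unrank_lt n a i : unrank n a i < i.+2.
Proof.
elim: n a => [//|n IHn] a /=.
by case: eqP => [->|_]; [rewrite ltn_mod | apply: IHn].
Qed.

Lemma unrankK n a : a < (n.+1)`! -> rank n (unrank n a) = a.
Proof.
elim: n a => [|n IHn] a /=; first by case: a.
move=> a_lt; rewrite eqxx (@eq_rank _ _ (unrank n (a %/ n.+2))); last first.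
  by move=> i lt_in; rewrite ifN // neq_ltn lt_in.
rewrite IHn; first by rewrite mulnC -divn_eq.
by rewrite ltn_divLR // mulnC -factS.
Qed.

(* A path of [B_R] is determined by the vertices it visits; the vertex in
   [V_(i+1)] is its [i]-th digit, of radix [i+2]. *)
Definition digit (x : Path B_R) (i : nat) : nat := (proj1_sig x i : BR_E i).2.

Lemma digit_lt x i : digit x i < i.+2.
Proof. exact: ltn_ord. Qed.

Definition edge_of_digits (d : nat -> nat) (k : nat) : BE B_R k :=
  ((if k is k'.+1 return 'I_k.+1 then inord (d k') else ord0, inord (d k)) : BR_E k).

Definition path_of_digits (d : nat -> nat) : Path B_R :=
  exist _ (edge_of_digits d) (conj erefl (fun _ => erefl)).

Lemma digit_path_of_digits d i : d i < i.+2 -> digit (path_of_digits d) i = d i.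
Proof. exact: inordK. Qed.

Lemma edge_digits (x : Path B_R) k : proj1_sig x k = edge_of_digits (digit x) k.
Proof.
case: x => x [x0 xS]; rewrite /edge_of_digits /digit /=.
case: k => [|k]; first by move: (x 0) x0 => [u v] /= ->; rewrite inord_val.
by move: (xS k) => /=; case: (x k.+1) => [u v] /= <-; rewrite !inord_val.
Qed.

Lemma edge_eq (x y : Path B_R) k : digit x k = digit y k ->
  (forall j, j.+1 = k -> digit x j = digit y j) -> proj1_sig x k = proj1_sig y k.
Proof.
rewrite !edge_digits /edge_of_digits => ->.
by case: k => [//|k] xy; rewrite xy.
Qed.

Lemma path_eq_digits (x y : Path B_R) : (forall i, digit x i = digit y i) -> x = y.
Proof.
move=> xy; have e : proj1_sig x = proj1_sig y.
  by apply: functional_extensionality_dep => k; apply: edge_eq.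
by case: x y xy e => [x px] [y py] _ /= e; subst y; rewrite (proof_irrelevance _ px py).
Qed.

Lemma digit_edge (x y : Path B_R) k : proj1_sig x k = proj1_sig y k -> digit x k = digit y k.
Proof. by rewrite /digit => ->. Qed.

Definition prefix_rank n (x : Path B_R) := rank n (digit x).

Definition agree n (x y : Path B_R) := forall k, k < n -> proj1_sig x k = proj1_sig y k.

Lemma prefix_rank_lt n x : prefix_rank n x < (n.+1)`!.
Proof. by apply: rank_lt => i _; apply: digit_lt. Qed.

Lemma prefix_rank_agree n x y : agree n x y -> prefix_rank n x = prefix_rank n y.
Proof. by move=> xy; apply: eq_rank => i lt_in; apply/digit_edge/xy. Qed.

Lemma agree_prefix_rank n x y : prefix_rank n x = prefix_rank n y -> agree n x y.
Proof.
move=> /rank_inj xy k lt_kn.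
have {}xy := xy (fun i _ => digit_lt x i) (fun i _ => digit_lt y i).
by apply: edge_eq => [|j jk]; apply: xy; lia.
Qed.

Lemma prefix_rank_unrank n a : a < (n.+1)`! -> prefix_rank n (path_of_digits (unrank n a)) = a.
Proof.
move=> a_lt; rewrite -[RHS](unrankK a_lt); apply: eq_rank => i _.
exact/digit_path_of_digits/unrank_lt.
Qed.

Definition inflate (k : nat) (s : nat -> nat) (a : nat) : nat := s (a %/ k) * k + a %% k.

Definition maps_into (m : nat) (s : nat -> nat) := forall a, a < m -> s a < m.

Lemma inflate_maps_into m k s : 0 < k -> maps_into m s -> maps_into (m * k) (inflate k s).
Proof.
move=> k_gt0 s_m a a_lt; rewrite /inflate.
have := s_m (a %/ k); rewrite ltn_divLR // => /(_ a_lt).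
have : a %% k < k by rewrite ltn_mod.
nia.
Qed.

Lemma inflateK m k s s' a : 0 < k -> (forall q, q < m -> s (s' q) = q) -> a < m * k ->
  inflate k s (inflate k s' a) = a.
Proof.
move=> k_gt0 ss' a_lt; rewrite /inflate.
have a_mod : a %% k < k by rewrite ltn_mod.
rewrite divnMDl // (divn_small a_mod) addn0 modnMDl modn_mod ss'; last by rewrite ltn_divLR.
by rewrite -divn_eq.
Qed.

Lemma inflate_mod k s a d : d %| k -> inflate k s a %% d = a %% d.
Proof.
by case/dvdnP=> c ->; rewrite /inflate mulnA modnMDl modn_dvdm // dvdn_mull.
Qed.

Section BlockMap.

Local Open Scope R_scope.

Definition block (m : nat) (y : R) : nat := Z.to_nat (Int_part (INR m * y)).

Definition blockmap (m : nat) (s : nat -> nat) (y : R) : R :=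
  (INR (s (block m y)) + frac_part (INR m * y)) / INR m.

Lemma INR_pos (m : nat) : (0 < m)%N -> 0 < INR m.
Proof. by move=> /ltP/lt_0_INR. Qed.

Lemma block_frac_eq (m k : nat) (r y : R) : 0 <= r < 1 -> INR m * y = INR k + r ->
  block m y = k /\ frac_part (INR m * y) = r.
Proof.
rewrite /block => r01 ->.
have up_kr : up (INR k + r) = (Z.of_nat k + 1)%Z.
  by symmetry; apply: tech_up; rewrite plus_IZR -INR_IZR_INZ /=; lra.
have int_kr : Int_part (INR k + r) = Z.of_nat k by rewrite /Int_part up_kr; lia.
rewrite /frac_part int_kr Nat2Z.id -INR_IZR_INZ; split; [done | ring].
Qed.

Lemma block_split (m : nat) (y : R) : (0 < m)%N -> 0 <= y < 1 ->
  (block m y < m)%N /\ INR m * y = INR (block m y) + frac_part (INR m * y) /\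
  0 <= frac_part (INR m * y) < 1.
Proof.
move=> /INR_pos m_gt0 y01.
have [int_le int_gt] := base_Int_part (INR m * y).
have int_ge0 : (0 <= Int_part (INR m * y))%Z.
  suff : (-1 < Int_part (INR m * y))%Z by lia.
  by apply: lt_IZR; nra.
have e : INR (block m y) = IZR (Int_part (INR m * y)).
  by rewrite /block INR_IZR_INZ Z2Nat.id.
have [frac_ge0 frac_lt1] := base_fp (INR m * y).
split; last split; last by split; lra.
- by apply/ltP/INR_lt; nra.
- by rewrite e /frac_part; ring.
Qed.

Lemma blockmap_spec (m : nat) s y : (0 < m)%N -> 0 <= y < 1 ->
  block m (blockmap m s y) = s (block m y) /\
  frac_part (INR m * blockmap m s y) = frac_part (INR m * y).
Proof.
move=> m_gt0 y01; have m_pos := INR_pos m_gt0.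
have [_ [_ frac01]] := block_split m_gt0 y01.
by apply: block_frac_eq => //; rewrite /blockmap; field; lra.
Qed.

Lemma blockmap_comp (m : nat) s t y : (0 < m)%N -> 0 <= y < 1 ->
  blockmap m s (blockmap m t y) = blockmap m (fun a => s (t a)) y.
Proof.
by move=> m_gt0 y01; have [e1 e2] := blockmap_spec t m_gt0 y01; rewrite {1}/blockmap e1 e2.
Qed.

Lemma blockmap_range (m : nat) s y : (0 < m)%N -> 0 <= y < 1 -> (s (block m y) < m)%N ->
  0 <= blockmap m s y < 1.
Proof.
move=> m_gt0 y01 /leP/le_INR; rewrite S_INR => s_lt.
have m_pos := INR_pos m_gt0; have s_ge0 := pos_INR (s (block m y)).
have [_ [_ frac01]] := block_split m_gt0 y01.
rewrite /blockmap; split.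
- by apply: Rmult_le_pos; [lra | apply/Rlt_le/Rinv_0_lt_compat].
- apply: (Rmult_lt_reg_r (INR m)) => //.
  by rewrite /Rdiv Rmult_assoc Rinv_l; lra.
Qed.

Lemma blockmap_inflate (m k : nat) s y : (0 < m)%N -> (0 < k)%N -> 0 <= y < 1 ->
  blockmap (m * k) (inflate k s) y = blockmap m s y.
Proof.
move=> m_gt0 k_gt0 y01; have m_pos := INR_pos m_gt0; have k_pos := INR_pos k_gt0.
have [_ [ey r01]] := block_split m_gt0 y01.
have [j_lt [er r'01]] := block_split k_gt0 r01.
rewrite /blockmap; set a := block m y in ey *.
set r := frac_part (INR m * y) in ey r01 er r'01 j_lt *.
set j := block k r in er j_lt; set r' := frac_part (INR k * r) in er r'01.
have e : INR (m * k) * y = INR (k * a + j) + r'.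
  by rewrite mult_INR plus_INR mult_INR Rplus_assoc -er (Rmult_comm (INR m)) Rmult_assoc ey; ring.
have [-> ->] := block_frac_eq r'01 e.
rewrite /inflate [(k * a)%N]mulnC divnMDl // modnMDl divn_small // modn_small // addn0.
rewrite plus_INR !mult_INR Rplus_assoc -er; field; lra.
Qed.

Lemma blockmap_left_end (m a : nat) s : (a < m)%N ->
  0 <= INR a / INR m < 1 /\ blockmap m s (INR a / INR m) = INR (s a) / INR m.
Proof.
move=> a_lt; have m_pos : 0 < INR m by apply: INR_pos; lia.
have /lt_INR a_lt' : (a < m)%coq_nat by apply/ltP.
have a_ge0 := pos_INR a.
have e : INR m * (INR a / INR m) = INR a + 0 by field; lra.
have [block_a frac0] := block_frac_eq (conj (Rle_refl 0) Rlt_0_1) e.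
split; last by rewrite /blockmap block_a frac0 Rplus_0_r.
split; first by apply: Rmult_le_pos; [lra | apply/Rlt_le/Rinv_0_lt_compat].
apply: (Rmult_lt_reg_r (INR m)) => //.
by rewrite /Rdiv Rmult_assoc Rinv_l; lra.
Qed.

Lemma blockmap_inj (m : nat) s t : (0 < m)%N ->
  (forall y, 0 <= y < 1 -> blockmap m s y = blockmap m t y) -> forall a, (a < m)%N -> s a = t a.
Proof.
move=> m_gt0 st a a_lt; have m_pos := INR_pos m_gt0.
have [a01 sa] := blockmap_left_end s a_lt; have [_ ta] := blockmap_left_end t a_lt.
apply: INR_eq; apply: (Rmult_eq_reg_r (/ INR m)); last by apply: Rinv_neq_0_compat; lra.
by have := st _ a01; rewrite sa ta.
Qed.

Lemma eq_blockmap (m : nat) s t y : (0 < m)%N -> 0 <= y < 1 ->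
  (forall a, (a < m)%N -> s a = t a) -> blockmap m s y = blockmap m t y.
Proof.
by move=> m_gt0 y01 st; rewrite /blockmap st //; case: (block_split m_gt0 y01).
Qed.

End BlockMap.

Section LevelData.

Implicit Types (g : Path B_R -> Path B_R) (f : I01 -> I01).

Definition prefix_action n g t := forall x, prefix_rank n (g x) = t (prefix_rank n x).

Definition encodes n t g f :=
  [/\ inGn n g, prefix_action n g t &
      forall x, proj1_sig (f x) = blockmap (n.+1)`! t (proj1_sig x)].

Definition corresponds g f := exists n t, encodes n t g f.

Lemma I01_fun_eq f1 f2 : (forall x, proj1_sig (f1 x) = proj1_sig (f2 x)) -> f1 = f2.
Proof.
move=> f12; apply: functional_extensionality => x; move: (f12 x).
by case: (f1 x) (f2 x) => [u pu] [v pv] /= uv; subst v; rewrite (proof_irrelevance _ pu pv).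
Qed.

Lemma inGn_succ n g : inGn n g -> inGn n.+1 g.
Proof.
move=> [g_bij [g_pre g_tail]]; split=> //; split=> [x y xy k lt_kn1|x k le_nk].
- case: (ltnP k n) => [lt_kn|le_nk]; last by rewrite !g_tail // xy.
  by apply: g_pre => // j lt_jn; apply: xy; lia.
- by apply: g_tail; lia.
Qed.

Lemma prefix_action_succ n g t : inGn n g -> prefix_action n g t ->
  prefix_action n.+1 g (inflate n.+2 t).
Proof.
move=> [_ [_ g_tail]] gt x; rewrite /prefix_rank /= -!/(prefix_rank n _) gt /inflate.
rewrite (digit_edge (g_tail x n (leqnn n))).
have dig_lt := digit_lt x n.
by rewrite [_ * prefix_rank n x]mulnC divnMDl // divn_small // addn0 modnMDl modn_small // mulnC.
Qed.

Lemma encodes_succ n t g f : encodes n t g f -> encodes n.+1 (inflate n.+2 t) g f.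
Proof.
case=> g_n gt fg; split; [exact: inGn_succ | exact: prefix_action_succ |].
move=> x; rewrite fg (factS n.+1) mulnC blockmap_inflate ?fact_gt0 //.
exact: proj2_sig x.
Qed.

Lemma encodes_up n n' t g f : n <= n' -> encodes n t g f -> exists t', encodes n' t' g f.
Proof.
move/subnK=> <- enc; elim: (n' - n) => [|d [t' enc']]; first by exists t.
by exists (inflate (d + n).+2 t'); apply: encodes_succ.
Qed.

Lemma prefix_action_unique n g t1 t2 : prefix_action n g t1 -> prefix_action n g t2 ->
  forall a, a < (n.+1)`! -> t1 a = t2 a.
Proof. by move=> gt1 gt2 a /prefix_rank_unrank <-; rewrite -gt1 -gt2. Qed.

Lemma corresponds_unique g f1 f2 : corresponds g f1 -> corresponds g f2 -> f1 = f2.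
Proof.
move=> [n1 [t1 enc1]] [n2 [t2 enc2]].
have [u1 [_ gu1 fu1]] := encodes_up (leq_maxl n1 n2) enc1.
have [u2 [_ gu2 fu2]] := encodes_up (leq_maxr n1 n2) enc2.
apply: I01_fun_eq => x; rewrite fu1 fu2.
apply: eq_blockmap; [exact: fact_gt0 | exact: proj2_sig x |].
exact: prefix_action_unique.
Qed.

Definition prefix_map n g a := prefix_rank n (g (path_of_digits (unrank n a))).

Lemma prefix_action_prefix_map n g : inGn n g -> prefix_action n g (prefix_map n g).
Proof.
move=> [_ [g_pre _]] x; apply/prefix_rank_agree/g_pre/agree_prefix_rank.
by rewrite prefix_rank_unrank // prefix_rank_lt.
Qed.

Lemma prefix_action_maps_into n g t : prefix_action n g t -> maps_into (n.+1)`! t.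
Proof. by move=> gt a /prefix_rank_unrank <-; rewrite -gt prefix_rank_lt. Qed.

Definition blockmap_I01 m t (m_gt0 : 0 < m) (t_m : maps_into m t) : I01 -> I01 :=
  fun x => exist _ (blockmap m t (proj1_sig x))
    (blockmap_range m_gt0 (proj2_sig x) (t_m _ (proj1 (block_split m_gt0 (proj2_sig x))))).

Lemma inGn_corresponds n g : inGn n g -> exists f, corresponds g f.
Proof.
move=> g_n; have g_act := prefix_action_prefix_map g_n.
exists (blockmap_I01 (fact_gt0 n.+1) (prefix_action_maps_into g_act)).
by exists n, (prefix_map n g).
Qed.

End LevelData.

Lemma maps_into_cancel_sym m t u : maps_into m t -> maps_into m u ->
  (forall b, b < m -> t (u b) = b) -> forall a, a < m -> u (t a) = a.
Proof.
move=> t_m u_m tu a a_lt.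
pose T (i : 'I_m) := Ordinal (t_m i (ltn_ord i)).
pose U (i : 'I_m) := Ordinal (u_m i (ltn_ord i)).
have UT : cancel U T by move=> i; apply: val_inj; rewrite /= tu.
exact: (congr1 val (canF_sym UT (Ordinal a_lt))).
Qed.

Lemma inRgroup_blockmap m t u f : 0 < m -> maps_into m t ->
  (forall a, a < m -> u (t a) = a) ->
  (forall x, proj1_sig (f x) = blockmap m t (proj1_sig x)) -> inRgroup f.
Proof.
case: m => [//|n] _ t_m ut fx.
have t_inj : injective (fun i : 'I_n.+1 => inord (t i) : 'I_n.+1).
  move=> i j /(congr1 val); rewrite /= !inordK ?t_m // => /(congr1 u).
  by rewrite !ut // => /val_inj.
exists n, (perm t_inj) => x; rewrite fx /blockmap permE.
have block_lt := proj1 (block_split (ltn0Sn n) (proj2_sig x)).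
by rewrite -/(block n.+1 _) (inordK block_lt) inordK // t_m.
Qed.

Definition relabel_digits N t (x : Path B_R) i :=
  if i < N then unrank N (t (prefix_rank N x)) i else digit x i.

Definition relabel N t x := path_of_digits (relabel_digits N t x).

Lemma digit_relabel N t x i : digit (relabel N t x) i = relabel_digits N t x i.
Proof.
apply: digit_path_of_digits; rewrite /relabel_digits.
by case: ifP => _; [apply: unrank_lt | apply: digit_lt].
Qed.

Lemma prefix_rank_relabel N t x : maps_into (N.+1)`! t ->
  prefix_rank N (relabel N t x) = t (prefix_rank N x).
Proof.
move=> t_N; rewrite -[RHS](unrankK (t_N _ (prefix_rank_lt N x))).
by apply: eq_rank => i lt_iN; rewrite digit_relabel /relabel_digits lt_iN.
Qed.

(* The last digit of the prefix is also the first vertex of the kept tail,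
   hence [t] must preserve ranks modulo [N.+2]. *)
Lemma relabel_tail N t x k : (forall a, a < (N.+2)`! -> t a %% N.+2 = a %% N.+2) ->
  N.+1 <= k -> proj1_sig (relabel N.+1 t x) k = proj1_sig x k.
Proof.
move=> t_mod le_Nk; apply: edge_eq => [|j jk].
  by rewrite digit_relabel /relabel_digits ltnNge le_Nk.
rewrite digit_relabel /relabel_digits; case: ltnP => // lt_jN.
have -> : j = N by lia.
rewrite /= eqxx t_mod ?prefix_rank_lt //.
exact/rank_mod/digit_lt.
Qed.

Lemma relabelK N t t' : maps_into (N.+1)`! t -> maps_into (N.+1)`! t' ->
  (forall a, a < (N.+1)`! -> t (t' a) = a) -> cancel (relabel N t') (relabel N t).
Proof.
move=> t_N t'_N tt' x; apply: path_eq_digits => i.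
rewrite digit_relabel /relabel_digits; case: ifP => lt_iN.
  2: by rewrite digit_relabel /relabel_digits lt_iN.
rewrite prefix_rank_relabel // tt' ?prefix_rank_lt //.
apply: (rank_inj (n := N)) => //; first by move=> *; apply: unrank_lt.
  by move=> *; apply: digit_lt.
by rewrite unrankK // prefix_rank_lt.
Qed.

Lemma relabel_inGn N t t' : maps_into (N.+2)`! t -> maps_into (N.+2)`! t' ->
  (forall a, a < (N.+2)`! -> t (t' a) = a) -> (forall a, a < (N.+2)`! -> t' (t a) = a) ->
  (forall a, a < (N.+2)`! -> t a %% N.+2 = a %% N.+2) ->
  inGn N.+1 (relabel N.+1 t).
Proof.
move=> t_N t'_N tt' t't t_mod; split; last split.
- by exists (relabel N.+1 t'); apply: relabelK.
- move=> x y /prefix_rank_agree xy; apply: agree_prefix_rank.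
  by rewrite !prefix_rank_relabel // xy.
- by move=> x k; apply: relabel_tail.
Qed.

Lemma inGn_comp n (g h : Path B_R -> Path B_R) : inGn n g -> inGn n h -> inGn n (g \o h).
Proof.
move=> [g_bij [g_pre g_tail]] [h_bij [h_pre h_tail]]; split; first exact: bij_comp.
by split=> [x y xy|x k le_nk /=]; [apply/g_pre/h_pre | rewrite g_tail ?h_tail].
Qed.

Definition perm_nat n (s : {perm 'I_n.+1}) (a : nat) : nat := s (inord a).

Lemma perm_natK n (s : {perm 'I_n.+1}) a : a < n.+1 -> perm_nat s^-1 (perm_nat s a) = a.
Proof. by move=> a_lt; rewrite /perm_nat inord_val permK inordK. Qed.

Lemma maps_into_perm_nat n (s : {perm 'I_n.+1}) : maps_into n.+1 (perm_nat s).
Proof. by move=> a _; apply: ltn_ord. Qed.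

Lemma inRgroup_corresponds f : inRgroup f -> exists2 g, inFullGroup g & corresponds g f.
Proof.
case=> n [s fs]; pose k := n`! * n.+2.
have fact_k : (n.+2)`! = n.+1 * k by rewrite /k !factS; lia.
have k_gt0 : 0 < k by rewrite muln_gt0 fact_gt0.
pose t := inflate k (perm_nat s); pose t' := inflate k (perm_nat s^-1).
have t_range : maps_into (n.+2)`! t.
  by rewrite fact_k; apply/inflate_maps_into/maps_into_perm_nat.
have t'_range : maps_into (n.+2)`! t'.
  by rewrite fact_k; apply/inflate_maps_into/maps_into_perm_nat.
have g_n : inGn n.+1 (relabel n.+1 t).
  apply: (relabel_inGn (t' := t')) => // a; rewrite ?fact_k => a_lt.
  - by apply: (inflateK (m := n.+1)) => // q q_lt; rewrite -{1}(invgK s) perm_natK.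
  - by apply: (inflateK (m := n.+1)) => // q q_lt; apply: perm_natK.
  - exact/inflate_mod/dvdn_mull.
exists (relabel n.+1 t); first by exists n.+1.
exists n.+1, t; split=> // [x|x]; first exact: prefix_rank_relabel.
by rewrite fs fact_k blockmap_inflate //; apply: proj2_sig x.
Qed.

Section FullGroupToR.

Implicit Types (g h : Path B_R -> Path B_R).

Definition phi g : I01 -> I01 := epsilon (inhabits id) (corresponds g).

Lemma corresponds_phi g : inFullGroup g -> corresponds g (phi g).
Proof. by case=> n /inGn_corresponds; apply: epsilon_spec. Qed.

Lemma phi_eq g f : corresponds g f -> phi g = f.
Proof. by move=> gf; apply: (corresponds_unique _ gf); apply: epsilon_spec; exists f. Qed.

Lemma encodes_phi_common g h : inFullGroup g -> inFullGroup h ->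
  exists n t u, encodes n t g (phi g) /\ encodes n u h (phi h).
Proof.
move=> /corresponds_phi [n1 [t1 enc1]] /corresponds_phi [n2 [t2 enc2]].
have [u1 enc1'] := encodes_up (leq_maxl n1 n2) enc1.
have [u2 enc2'] := encodes_up (leq_maxr n1 n2) enc2.
by exists (maxn n1 n2), u1, u2.
Qed.

Lemma phi_inRgroup g : inFullGroup g -> inRgroup (phi g).
Proof.
move=> /corresponds_phi [n [t [[[g' _ g'K] _] gt fg]]].
have t_range := prefix_action_maps_into gt.
pose u b := prefix_rank n (g' (path_of_digits (unrank n b))).
have u_range : maps_into (n.+1)`! u by move=> b _; apply: prefix_rank_lt.
have ut : forall a, a < (n.+1)`! -> u (t a) = a.
  apply: (maps_into_cancel_sym t_range u_range) => b b_lt.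
  by rewrite -gt g'K prefix_rank_unrank.
exact: inRgroup_blockmap (fact_gt0 _) t_range ut fg.
Qed.

Lemma phi_inj g h : inFullGroup g -> inFullGroup h -> phi g = phi h -> g = h.
Proof.
move=> g_G h_G gh.
have [n [t [u [[[_ [_ g_tail]] gt fg] [[_ [_ h_tail]] hu fh]]]]] := encodes_phi_common g_G h_G.
have tu : forall a, a < (n.+1)`! -> t a = u a.
  apply: (blockmap_inj (fact_gt0 _)) => y y01.
  by rewrite -(fg (exist _ y y01)) -(fh (exist _ y y01)) gh.
apply: functional_extensionality => x; apply: path_eq_digits => k; apply: digit_edge.
case: (ltnP k n) => [lt_kn|le_nk]; last by rewrite g_tail ?h_tail.
by apply: (agree_prefix_rank (n := n)) => //; rewrite gt hu tu // prefix_rank_lt.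
Qed.

Lemma phi_comp g h : inFullGroup g -> inFullGroup h -> phi (g \o h) = phi g \o phi h.
Proof.
move=> g_G h_G; have [n [t [u [[g_n gt fg] [h_n hu fh]]]]] := encodes_phi_common g_G h_G.
apply: phi_eq; exists n, (fun a => t (u a)); split; first exact: inGn_comp.
  by move=> x /=; rewrite gt hu.
by move=> x /=; rewrite fg fh blockmap_comp ?fact_gt0 //; apply: proj2_sig x.
Qed.

End FullGroupToR.

Theorem mainTheorem19 :
  comp_groups_isomorphic (@inFullGroup B_R) inRgroup.
Proof.
exists phi; split; first exact: phi_inRgroup.
split; first exact: phi_inj.
split; last exact: phi_comp.
move=> f /inRgroup_corresponds [g g_G gf].
by exists g; last exact: phi_eq.
Qed.
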